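(* Let $k\ge1$ be odd, $\omega=i\sqrt2$, and with $S=\begin{psmallmatrix}0&-1\\1&0\end{psmallmatrix}$, $T=\begin{psmallmatrix}1&1\\0&1\end{psmallmatrix}$, $T_\omega=\begin{psmallmatrix}1&\omega\\0&1\end{psmallmatrix}$, $U=TS$, let $W_{k,k}=\ker(\mathbf{1}+S)\cap\ker(\mathbf{1}+U+U^2)\cap\ker(\mathbf{1}+ST_\omega+T_\omega S+T_\omega^{-1}ST_\omega S)$. Let $\varepsilon=\begin{psmallmatrix}-1&0\\0&1\end{psmallmatrix}$, so $P|\varepsilon=P(-z,-\bar z)$. Then $W_{k,k}|\varepsilon=W_{k,k}$, and hence $W_{k,k}=W_{k,k}^1\oplus W_{k,k}^{-1}$, where $W_{k,k}^{\pm1}=W_{k,k}\cap\{P\in V_{k,k}:P(-z,-\bar z)=\pm P(z,\bar z)\}$.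
   Context: $V_{k,k}$: polynomials $\sum_{0\le i,j\le k}c_{ij}z^i\bar z^j$ over $\mathbb{C}$ with right action $(P|\gamma)(z,\bar z)=(cz+e)^k\overline{(cz+e)}^kP\!\left(\frac{az+b}{cz+e},\frac{\bar a\bar z+\bar b}{\bar c\bar z+\bar e}\right)$ for $\gamma=\begin{psmallmatrix}a&b\\c&e\end{psmallmatrix}$, extended linearly; $\ker(X)=\{P:P|X=0\}$; $W|\varepsilon=\{P|\varepsilon:P\in W\}$. *)

(* Complex numbers are modelled by algC (algebraic complex
   numbers), which contains i, sqrt 2 and has complex conjugation. *)
From mathcomp Require Import all_boot all_order all_algebra.
From mathcomp Require Import algC.
Set Implicit Arguments. Unset Strict Implicit. Unset Printing Implicit Defensive.
Import Order.TTheory GRing.Theory Num.Theory.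
Local Open Scope ring_scope.

(* A polynomial in two independent variables z, zbar is an element of
   {poly {poly algC}}: the outer variable is zbar, the inner one is z.
   The coefficient of z^i zbar^j of P is (P`_j)`_i. *)
Definition bipoly := {poly {poly algC}}.

Definition inV (k : nat) (P : bipoly) : Prop :=
  (size P <= k.+1)%N /\ forall j : nat, (size (P`_j)%R <= k.+1)%N.

Definition linZ (a b : algC) : bipoly := (a *: 'X + b%:P)%:P.
Definition linW (a b : algC) : bipoly := (a%:P) *: 'X + (b%:P)%:P.

(* (P|g)(z,zbar) = (cz+e)^k conj(cz+e)^k P((az+b)/(cz+e), conj-version),
   expanded: sum_{i,j} c_ij (az+b)^i (cz+e)^(k-i) (a'w+b')^j (c'w+e')^(k-j)
   where ' is complex conjugation and w = zbar. *)
Definition act (k : nat) (g : 'M[algC]_2) (P : bipoly) : bipoly :=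
  let a := g 0 0 in let b := g 0 1 in let c := g 1 0 in let e := g 1 1 in
  \sum_(i < k.+1) \sum_(j < k.+1)
     ((P`_j)`_i)%:P%:P * (linZ a b) ^+ i * (linZ c e) ^+ (k - i)
       * (linW a^* b^*) ^+ j * (linW c^* e^*) ^+ (k - j).

(* linear extension to a formal sum (with coefficients 1) of matrices *)
Definition act_sum (k : nat) (s : seq 'M[algC]_2) (P : bipoly) : bipoly :=
  \sum_(g <- s) act k g P.

Definition inKer (k : nat) (s : seq 'M[algC]_2) (P : bipoly) : Prop :=
  inV k P /\ act_sum k s P = 0.

Definition omega : algC := 'i * sqrtC 2.
Definition Smx : 'M[algC]_2 := \matrix_(i < 2, j < 2)
  (if (i == 0) && (j == 1) then -1 else if (i == 1) && (j == 0) then 1 else 0).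
Definition Tmx : 'M[algC]_2 := \matrix_(i < 2, j < 2)
  (if i == j then 1 else if (i == 0) && (j == 1) then 1 else 0).
Definition Tw : 'M[algC]_2 := \matrix_(i < 2, j < 2)
  (if i == j then 1 else if (i == 0) && (j == 1) then omega else 0).
Definition Umx : 'M[algC]_2 := Tmx *m Smx.
Definition epsmx : 'M[algC]_2 := \matrix_(i < 2, j < 2)
  (if i == j then (if i == 0 then -1 else 1) else 0).

Definition inW (k : nat) (P : bipoly) : Prop :=
  inKer k [:: 1%:M; Smx] P /\
  inKer k [:: 1%:M; Umx; Umx *m Umx] P /\
  inKer k [:: 1%:M; Smx *m Tw; Tw *m Smx; invmx Tw *m Smx *m Tw *m Smx] P.

Definition negvars (P : bipoly) : bipoly :=
  (map_poly (fun q : {poly algC} => q \Po (- 'X)) P) \Po (- 'X).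

Definition inWs (k : nat) (s : algC) (P : bipoly) : Prop :=
  inW k P /\ negvars P = s%:P%:P * P.

(* The action P|g is the bihomogeneous substitution of the linear forms
   az+b, cz+e and their conjugates into P; it is a right action of 2x2
   matrices on V_{k,k} in which -g acts as g.  For each of the three defining
   relations sum_i x_i of W_{k,k} there are e and R with e x_i = +-y_i R,
   where (y_i) is a permutation of (x_i): e = R = eps for 1 + S, e = R = S eps
   for 1 + U + U^2, and e = eps, R = eps T_w S for the T_w-relation.  Hence
   P|e again satisfies the relation, and S eps acts as -eps on ker(1 + S), so
   W_{k,k}|eps = W_{k,k}.  As eps^2 = 1 and P|eps = P(-z,-zbar), the
   decomposition P = (P + P|eps)/2 + (P - P|eps)/2 splits W_{k,k}. *)

From mathcomp Require Import all_boot all_order all_algebra.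
From mathcomp Require Import algC.
From mathcomp Require Import ring zify.
Import GRing.Theory Num.Theory.
Set Implicit Arguments. Unset Strict Implicit. Unset Printing Implicit Defensive.
Local Open Scope ring_scope.

Definition bideg (m n : nat) (P : bipoly) : Prop :=
  (size P <= n.+1)%N /\ forall j : nat, (size (P`_j)%R <= m.+1)%N.

Definition zX : bipoly := 'X%:P.
Definition wX : bipoly := 'X.

(* [P (A/B, C/D) B^m D^n]: with linear forms for [A, B, C, D] this is [act]. *)
Definition homsubst (m n : nat) (P A B C D : bipoly) : bipoly :=
  \sum_(i < m.+1) \sum_(j < n.+1)
     ((P`_j)`_i)%:P%:P * A ^+ i * B ^+ (m - i) * C ^+ j * D ^+ (n - j).

Lemma poly_expand (R : nzRingType) n (p : {poly R}) :
  (size p <= n)%N -> p = \sum_(i < n) p`_i *: 'X^i.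
Proof. by move=> le_p_n; rewrite -poly_def -/(take_poly n p) take_poly_id. Qed.

Lemma bipoly_expand m n P : bideg m n P ->
  P = \sum_(i < m.+1) \sum_(j < n.+1) ((P`_j)`_i)%:P%:P * zX ^+ i * wX ^+ j.
Proof.
case=> szP szPj; rewrite exchange_big /= {1}(poly_expand szP).
apply: eq_bigr => j _; rewrite -mul_polyC {1}(poly_expand (szPj j)).
rewrite rmorph_sum mulr_suml; apply: eq_bigr => i _.
by rewrite -mul_polyC rmorphM /= rmorphXn.
Qed.

Lemma bideg0 m n : bideg m n 0.
Proof. by split=> [|j]; rewrite ?coef0 size_poly0. Qed.

Lemma bidegD m n P Q : bideg m n P -> bideg m n Q -> bideg m n (P + Q).
Proof.
move=> [szP szPj] [szQ szQj]; split=> [|j].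
  by apply: leq_trans (size_polyD _ _) _; rewrite geq_max szP szQ.
by rewrite coefD; apply: leq_trans (size_polyD _ _) _; rewrite geq_max szPj szQj.
Qed.

Lemma bideg_sum m n I (r : seq I) (F : I -> bipoly) :
  (forall x, bideg m n (F x)) -> bideg m n (\sum_(x <- r) F x).
Proof. by move=> degF; apply: big_ind; [exact: bideg0 | exact: bidegD |]. Qed.

Lemma bideg_mul m1 n1 m2 n2 P Q :
  bideg m1 n1 P -> bideg m2 n2 Q -> bideg (m1 + m2) (n1 + n2) (P * Q).
Proof.
move=> [szP szPj] [szQ szQj]; split.
  by apply: leq_trans (size_polyMleq _ _) _; lia.
move=> j; rewrite coefM.
apply: (big_ind (fun p : {poly algC} => size p <= (m1 + m2).+1)%N) => [|p q szp szq|l _].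
- by rewrite size_poly0.
- by apply: leq_trans (size_polyD _ _) _; rewrite geq_max szp szq.
- by apply: leq_trans (size_polyMleq _ _) _; have := szPj l; have := szQj (j - l)%N; lia.
Qed.

Lemma bidegC (c : algC) : bideg 0 0 c%:P%:P.
Proof.
split=> [|j]; first exact: size_polyC_leq1.
by rewrite coefC; case: eqP; rewrite ?size_polyC_leq1 ?size_poly0.
Qed.

Lemma bidegCM m n (c : algC) P : bideg m n P -> bideg m n (c%:P%:P * P).
Proof. exact: (bideg_mul (bidegC c)). Qed.

Lemma bidegX m n e P : bideg m n P -> bideg (e * m) (e * n) (P ^+ e).
Proof.
move=> degP; elim: e => [|e IH]; first by have := bidegC 1; rewrite !rmorph1.
by rewrite exprS !mulSn; apply: bideg_mul.
Qed.

Lemma bideg_zX : bideg 1 0 zX.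
Proof.
split=> [|j]; first exact: size_polyC_leq1.
by rewrite coefC; case: eqP; rewrite ?size_polyX ?size_poly0.
Qed.

Lemma bideg_wX : bideg 0 1 wX.
Proof.
split=> [|j]; first by rewrite size_polyX.
by rewrite coefX; case: eqP; rewrite ?size_poly1 ?size_poly0.
Qed.

Lemma linZE a b : linZ a b = a%:P%:P * zX + b%:P%:P.
Proof. by rewrite /linZ rmorphD /= -mul_polyC rmorphM. Qed.

Lemma linWE a b : linW a b = a%:P%:P * wX + b%:P%:P.
Proof. by rewrite /linW -mul_polyC. Qed.

Lemma bideg_linZ a b : bideg 1 0 (linZ a b).
Proof.
rewrite linZE; apply: bidegD; first exact: (bideg_mul (bidegC a) bideg_zX).
by case: (bidegC b) => szb szbj; split=> // j; apply: leq_trans (szbj j) _.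
Qed.

Lemma bideg_linW a b : bideg 0 1 (linW a b).
Proof.
rewrite linWE; apply: bidegD; first exact: (bideg_mul (bidegC a) bideg_wX).
by case: (bidegC b) => szb szbj; split=> //; apply: leq_trans szb _.
Qed.

Lemma bideg_hmonomial m n i j L1 L2 M1 M2 : (i <= m)%N -> (j <= n)%N ->
  bideg 1 0 L1 -> bideg 1 0 L2 -> bideg 0 1 M1 -> bideg 0 1 M2 ->
  bideg m n (L1 ^+ i * L2 ^+ (m - i) * M1 ^+ j * M2 ^+ (n - j)).
Proof.
move=> le_im le_jn /(bidegX i) L1i /(bidegX (m - i)) L2i.
move=> /(bidegX j) M1j /(bidegX (n - j)) M2j.
rewrite !muln0 !muln1 in L1i L2i M1j M2j.
have := bideg_mul (bideg_mul (bideg_mul L1i L2i) M1j) M2j.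
by rewrite !addn0 !add0n subnKC // subnKC.
Qed.

Section HomogeneousSubstitution.
Variables A B C D : bipoly.
Local Notation hs m n P := (homsubst m n P A B C D).

Lemma homsubstD m n P Q : hs m n (P + Q) = hs m n P + hs m n Q.
Proof.
rewrite /homsubst -big_split; apply: eq_bigr => i _; rewrite -big_split.
by apply: eq_bigr => j _; rewrite !coefD !rmorphD /= !mulrDl.
Qed.

Lemma homsubst0 m n : hs m n 0 = 0.
Proof.
by rewrite /homsubst big1 // => i _; rewrite big1 // => j _; rewrite !coef0 !rmorph0 !mul0r.
Qed.

Lemma homsubst_sum m n I (r : seq I) (F : I -> bipoly) :
  hs m n (\sum_(x <- r) F x) = \sum_(x <- r) hs m n (F x).
Proof. exact: (big_morph (fun P => hs m n P) (homsubstD m n) (homsubst0 m n)). Qed.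

Lemma homsubstCM m n (c : algC) P : hs m n (c%:P%:P * P) = c%:P%:P * hs m n P.
Proof.
rewrite /homsubst mulr_sumr; apply: eq_bigr => i _; rewrite mulr_sumr.
by apply: eq_bigr => j _; rewrite !coefCM !rmorphM /= !mulrA.
Qed.

Lemma homsubst_monomial m n (c : algC) i j : (i <= m)%N -> (j <= n)%N ->
  hs m n (c%:P%:P * zX ^+ i * wX ^+ j) =
  c%:P%:P * A ^+ i * B ^+ (m - i) * C ^+ j * D ^+ (n - j).
Proof.
move=> le_im le_jn; rewrite -mulrA homsubstCM -!mulrA; congr (_ * _).
rewrite /homsubst (bigD1 (Ordinal (le_im : (i < m.+1)%N))) //=.
rewrite [X in _ + X = _]big1 => [|i' ne_i'i]; last first.
  rewrite big1 // => j' _.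
  rewrite /zX -rmorphXn /= coefCM coefXn mulr_natr coefMn coefXn.
  have -> : (i' == i :> nat) = false by apply: contraNF ne_i'i => /eqP eq_i'i; apply/eqP/val_inj.
  by rewrite mul0rn !rmorph0 !mul0r.
rewrite addr0 (bigD1 (Ordinal (le_jn : (j < n.+1)%N))) //=.
rewrite [X in _ + X = _]big1 => [|j' ne_j'j]; last first.
  rewrite /zX -rmorphXn /= coefCM coefXn.
  have -> : (j' == j :> nat) = false by apply: contraNF ne_j'j => /eqP eq_j'j; apply/eqP/val_inj.
  by rewrite mulr0 coef0 !rmorph0 !mul0r.
rewrite /zX -rmorphXn /= coefCM coefXn eqxx mulr1 coefXn eqxx !rmorph1.
by rewrite addr0 mul1r !mulrA.
Qed.

Lemma homsubst_mul m1 n1 m2 n2 P Q : bideg m1 n1 P -> bideg m2 n2 Q ->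
  hs (m1 + m2) (n1 + n2) (P * Q) = hs m1 n1 P * hs m2 n2 Q.
Proof.
move=> degP degQ; rewrite {1}(bipoly_expand degP) {1}(bipoly_expand degQ).
rewrite [hs m1 n1 P]/homsubst [hs m2 n2 Q]/homsubst.
rewrite mulr_suml homsubst_sum mulr_suml; apply: eq_bigr => i1 _.
rewrite mulr_suml homsubst_sum mulr_suml; apply: eq_bigr => j1 _.
rewrite mulr_sumr homsubst_sum mulr_sumr; apply: eq_bigr => i2 _.
rewrite mulr_sumr homsubst_sum mulr_sumr; apply: eq_bigr => j2 _.
set c1 := (P`_j1)`_i1; set c2 := (Q`_j2)`_i2.
have := ltn_ord i1; have := ltn_ord i2; have := ltn_ord j1; have := ltn_ord j2.
move=> lt_j2 lt_j1 lt_i2 lt_i1.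
rewrite (_ : c1%:P%:P * zX ^+ i1 * wX ^+ j1 * (c2%:P%:P * zX ^+ i2 * wX ^+ j2) =
  (c1 * c2)%:P%:P * zX ^+ (i1 + i2) * wX ^+ (j1 + j2)); last first.
  by rewrite !rmorphM /= !exprD; ring.
rewrite homsubst_monomial; [|lia|lia].
rewrite (_ : (m1 + m2 - (i1 + i2) = (m1 - i1) + (m2 - i2))%N); last by lia.
rewrite (_ : (n1 + n2 - (j1 + j2) = (n1 - j1) + (n2 - j2))%N); last by lia.
by rewrite !rmorphM /= !exprD; ring.
Qed.

Lemma homsubst1 : hs 0 0 1 = 1.
Proof. by rewrite /homsubst !big_ord1 !coef1 /= !rmorph1 !mulr1. Qed.

Lemma homsubstX m n e P : bideg m n P -> hs (e * m) (e * n) (P ^+ e) = hs m n P ^+ e.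
Proof.
move=> degP; elim: e => [|e IH]; first by rewrite !expr0 homsubst1.
by rewrite !exprS !mulSn homsubst_mul ?IH //; exact: bidegX.
Qed.

Lemma homsubst_linZ a b : hs 1 0 (linZ a b) = a%:P%:P * A + b%:P%:P * B.
Proof.
rewrite (_ : linZ a b = a%:P%:P * zX ^+ 1 * wX ^+ 0 + b%:P%:P * zX ^+ 0 * wX ^+ 0).
  by rewrite homsubstD !homsubst_monomial // !mulr1.
by rewrite linZE !mulr1.
Qed.

Lemma homsubst_linW a b : hs 0 1 (linW a b) = a%:P%:P * C + b%:P%:P * D.
Proof.
rewrite (_ : linW a b = a%:P%:P * zX ^+ 0 * wX ^+ 1 + b%:P%:P * zX ^+ 0 * wX ^+ 0).
  by rewrite homsubstD !homsubst_monomial // !mulr1.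
by rewrite linWE !mulr1.
Qed.

Lemma homsubst_hmonomial m n i j L1 L2 M1 M2 : (i <= m)%N -> (j <= n)%N ->
  bideg 1 0 L1 -> bideg 1 0 L2 -> bideg 0 1 M1 -> bideg 0 1 M2 ->
  hs m n (L1 ^+ i * L2 ^+ (m - i) * M1 ^+ j * M2 ^+ (n - j)) =
  hs 1 0 L1 ^+ i * hs 1 0 L2 ^+ (m - i) * hs 0 1 M1 ^+ j * hs 0 1 M2 ^+ (n - j).
Proof.
move=> le_im le_jn degL1 degL2 degM1 degM2.
have := homsubstX i degL1; have := homsubstX (m - i) degL2.
have := homsubstX j degM1; have := homsubstX (n - j) degM2.
have := bidegX i degL1; have := bidegX (m - i) degL2.
have := bidegX j degM1; have := bidegX (n - j) degM2.
rewrite !muln0 !muln1 => dM2 dM1 dL2 dL1 <- <- <- <-.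
rewrite -(homsubst_mul dL1 dL2) -(homsubst_mul (bideg_mul dL1 dL2) dM1).
rewrite -(homsubst_mul (bideg_mul (bideg_mul dL1 dL2) dM1) dM2).
by rewrite !addn0 !add0n subnKC // subnKC.
Qed.

End HomogeneousSubstitution.

Lemma homsubst_comp m n P L1 L2 M1 M2 A B C D :
  bideg 1 0 L1 -> bideg 1 0 L2 -> bideg 0 1 M1 -> bideg 0 1 M2 ->
  homsubst m n (homsubst m n P L1 L2 M1 M2) A B C D =
  homsubst m n P (homsubst 1 0 L1 A B C D) (homsubst 1 0 L2 A B C D)
                 (homsubst 0 1 M1 A B C D) (homsubst 0 1 M2 A B C D).
Proof.
move=> degL1 degL2 degM1 degM2.
rewrite [homsubst m n P L1 L2 M1 M2]/homsubst homsubst_sum; apply: eq_bigr => i _.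
rewrite homsubst_sum; apply: eq_bigr => j _.
rewrite -!mulrA homsubstCM !mulrA homsubst_hmonomial ?mulrA //.
  exact: ltn_ord i.
exact: ltn_ord j.
Qed.

Lemma bideg_homsubst m n P L1 L2 M1 M2 :
  bideg 1 0 L1 -> bideg 1 0 L2 -> bideg 0 1 M1 -> bideg 0 1 M2 ->
  bideg m n (homsubst m n P L1 L2 M1 M2).
Proof.
move=> degL1 degL2 degM1 degM2; apply: bideg_sum => i; apply: bideg_sum => j.
rewrite -!mulrA; apply: bidegCM; rewrite !mulrA.
by apply: bideg_hmonomial => //; [exact: ltn_ord i | exact: ltn_ord j].
Qed.

Lemma homsubst_scale m n P (c d : bipoly) A B C D :
  homsubst m n P (c * A) (c * B) (d * C) (d * D) =
  c ^+ m * d ^+ n * homsubst m n P A B C D.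
Proof.
rewrite /homsubst mulr_sumr; apply: eq_bigr => i _; rewrite mulr_sumr.
apply: eq_bigr => j _; have := ltn_ord i; have := ltn_ord j; rewrite !ltnS => le_jn le_im.
rewrite -[in c ^+ m](subnKC le_im) -[in d ^+ n](subnKC le_jn) !exprMn !exprD; ring.
Qed.

Lemma homsubst_dehom m n P (a : {poly algC}) C : bideg m n P ->
  homsubst m n P a%:P 1 C 1 = map_poly (comp_poly a) P \Po C.
Proof.
move=> degP; rewrite {2}(bipoly_expand degP) !rmorph_sum; apply: eq_bigr => i _.
rewrite !rmorph_sum; apply: eq_bigr => j _.
rewrite !rmorphM !rmorphXn /= !expr1n !mulr1 /zX /wX !map_polyC map_polyX /=.
by rewrite !comp_polyC !comp_polyX.
Qed.

Lemma mulmx2E (g h : 'M[algC]_2) i j : (g *m h) i j = g i 0 * h 0 j + g i 1 * h 1 j.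
Proof.
rewrite mxE !big_ord_recl big_ord0 addr0.
by have -> : lift ord0 (ord0 : 'I_1) = 1 :> 'I_2 by apply: val_inj.
Qed.

Section Action.
Variable k : nat.

Lemma act_homsubst g P : act k g P =
  homsubst k k P (linZ (g 0 0) (g 0 1)) (linZ (g 1 0) (g 1 1))
                 (linW (g 0 0)^* (g 0 1)^*) (linW (g 1 0)^* (g 1 1)^*).
Proof. by []. Qed.

Lemma bideg_act g P : bideg k k (act k g P).
Proof. by apply: bideg_homsubst; apply: bideg_linZ || apply: bideg_linW. Qed.

Lemma actD g P Q : act k g (P + Q) = act k g P + act k g Q.
Proof. exact: homsubstD. Qed.

Lemma act0 g : act k g 0 = 0.
Proof. exact: homsubst0. Qed.

Lemma actCM g (c : algC) P : act k g (c%:P%:P * P) = c%:P%:P * act k g P.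
Proof. exact: homsubstCM. Qed.

Lemma actN g P : act k g (- P) = - act k g P.
Proof. by apply/eqP; rewrite -subr_eq0 opprK -actD addNr act0. Qed.

Lemma act_mulmx g h P : bideg k k P -> act k (g *m h) P = act k h (act k g P).
Proof.
move=> degP; rewrite !act_homsubst homsubst_comp;
  try solve [apply: bideg_linZ | apply: bideg_linW].
rewrite !homsubst_linZ !homsubst_linW !linZE !linWE !mulmx2E !rmorphD !rmorphM /=.
by congr homsubst; ring.
Qed.

Lemma act_oppmx g P : act k (- g) P = act k g P.
Proof.
have linZN a b : linZ (- a) (- b) = -1 * linZ a b by rewrite !linZE !rmorphN; ring.
have linWN a b : linW (- a) (- b) = -1 * linW a b by rewrite !linWE !rmorphN; ring.
rewrite act_homsubst !mxE !rmorphN !linZN !linWN homsubst_scale.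
by rewrite -exprMn mulrNN mulr1 expr1n mul1r.
Qed.

Lemma act1mx P : bideg k k P -> act k 1%:M P = P.
Proof.
move=> degP; rewrite act_homsubst !mxE /= /linZ /linW.
rewrite !(rmorph0, rmorph1, scale1r, scale0r, add0r, addr0) homsubst_dehom //.
by rewrite map_poly_id ?comp_polyXr // => q _; exact: comp_polyXr.
Qed.

Lemma negvars_act P : bideg k k P -> negvars P = act k epsmx P.
Proof.
move=> degP; rewrite act_homsubst !mxE /= !rmorphN /linZ /linW.
by rewrite !(rmorph0, rmorph1, scale0r, add0r, addr0) rmorphN rmorph1 !scaleN1r homsubst_dehom.
Qed.

End Action.

Lemma act_sum_cons k g s P : act_sum k (g :: s) P = act k g P + act_sum k s P.
Proof. exact: big_cons. Qed.

Lemma act_sumD k s P Q : act_sum k s (P + Q) = act_sum k s P + act_sum k s Q.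
Proof. by rewrite /act_sum -big_split; apply: eq_bigr => g _; rewrite actD. Qed.

Lemma act_sumCM k s (c : algC) P : act_sum k s (c%:P%:P * P) = c%:P%:P * act_sum k s P.
Proof. by rewrite /act_sum mulr_sumr; apply: eq_bigr => g _; rewrite actCM. Qed.

Lemma inKerD k s P Q : inKer k s P -> inKer k s Q -> inKer k s (P + Q).
Proof.
by move=> [degP kerP] [degQ kerQ]; split; [exact: bidegD | rewrite act_sumD kerP kerQ addr0].
Qed.

Lemma inKerCM k s (c : algC) P : inKer k s P -> inKer k s (c%:P%:P * P).
Proof. by move=> [degP kerP]; split; [exact: bidegCM | rewrite act_sumCM kerP mulr0]. Qed.

Lemma inKer_perm k s t P : perm_eq s t -> inKer k s P -> inKer k t P.
Proof. by move=> eq_st [degP kerP]; split; rewrite // /act_sum -(perm_big _ eq_st). Qed.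

Lemma inKerN k s P : inKer k s P -> inKer k s (- P).
Proof. by move=> /(inKerCM (-1)); rewrite !rmorphN !rmorph1 mulN1r. Qed.

Lemma act_Smx_inKer k P : inKer k [:: 1%:M; Smx] P -> act k Smx P = - P.
Proof.
case=> degP; rewrite !act_sum_cons /act_sum big_nil addr0 act1mx //.
by move/eqP; rewrite addrC addr_eq0 => /eqP.
Qed.

Definition intertwines_pm (e R x y : 'M[algC]_2) : bool :=
  (e *m x == y *m R) || (e *m x == - (y *m R)).

Lemma act_sum_intertwine k e R s t P : bideg k k P ->
  all2 (intertwines_pm e R) s t -> act_sum k s (act k e P) = act k R (act_sum k t P).
Proof.
move=> degP; elim: s t => [|x s IH] [|y t] //=; first by rewrite /act_sum !big_nil act0.
case/andP=> exy /IH {}IH; rewrite !act_sum_cons actD IH -!act_mulmx //.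
by case/orP: exy => /eqP->; rewrite ?act_oppmx.
Qed.

Lemma inKer_intertwine k e R s t P :
  all2 (intertwines_pm e R) s t -> inKer k t P -> inKer k s (act k e P).
Proof.
move=> est [degP kerP]; split; first exact: bideg_act.
by rewrite (act_sum_intertwine degP est) kerP act0.
Qed.

Definition mx2 (a b c d : algC) : 'M[algC]_2 :=
  \matrix_(i, j) if i == 0 then (if j == 0 then a else b) else (if j == 0 then c else d).

Lemma mx2E (g : 'M[algC]_2) : g = mx2 (g 0 0) (g 0 1) (g 1 0) (g 1 1).
Proof.
apply/matrixP => i j; rewrite mxE.
by case: i => [[|[|//]] ?]; case: j => [[|[|//]] ?]; congr (g _ _); apply: val_inj.
Qed.

Lemma mul_mx2 a b c d a' b' c' d' :
  mx2 a b c d *m mx2 a' b' c' d' =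
  mx2 (a * a' + b * c') (a * b' + b * d') (c * a' + d * c') (c * b' + d * d').
Proof. by rewrite [LHS]mx2E !mulmx2E !mxE. Qed.

Lemma opp_mx2 a b c d : - mx2 a b c d = mx2 (- a) (- b) (- c) (- d).
Proof. by apply/matrixP => i j; rewrite !mxE; case: (i == 0); case: (j == 0). Qed.

Lemma mx2_congr a b c d a' b' c' d' : a = a' -> b = b' -> c = c' -> d = d' ->
  mx2 a b c d = mx2 a' b' c' d'.
Proof. by move=> -> -> -> ->. Qed.

Lemma omega_sqr : omega * omega = -2.
Proof. by rewrite /omega mulrACA -!expr2 sqrCi sqrtCK mulN1r. Qed.

Lemma Smx_mx2 : Smx = mx2 0 (-1) 1 0. Proof. by rewrite [LHS]mx2E !mxE. Qed.
Lemma Tmx_mx2 : Tmx = mx2 1 1 0 1. Proof. by rewrite [LHS]mx2E !mxE. Qed.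
Lemma Tw_mx2 : Tw = mx2 1 omega 0 1. Proof. by rewrite [LHS]mx2E !mxE. Qed.
Lemma epsmx_mx2 : epsmx = mx2 (-1) 0 0 1. Proof. by rewrite [LHS]mx2E !mxE. Qed.
Lemma mx1_mx2 : 1%:M = mx2 1 0 0 1. Proof. by rewrite [LHS]mx2E !mxE. Qed.

Lemma invTw_mx2 : invmx Tw = mx2 1 (- omega) 0 1.
Proof.
have TwK : Tw *m mx2 1 (- omega) 0 1 = 1%:M.
  by rewrite Tw_mx2 mul_mx2 mx1_mx2; apply: mx2_congr; ring.
have [Tw_unit _] := mulmx1_unit TwK.
by rewrite -(mulKmx Tw_unit (mx2 1 (- omega) 0 1)) TwK mulmx1.
Qed.

Ltac mx2_ring :=
  rewrite /Umx ?invTw_mx2 ?Smx_mx2 ?Tmx_mx2 ?Tw_mx2 ?epsmx_mx2 ?mx1_mx2 !mul_mx2 ?opp_mx2;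
  apply: mx2_congr; ring: omega_sqr.

Ltac intertwines_pm_by_ring :=
  rewrite /= andbT /intertwines_pm; repeat (apply/andP; split);
  first [ apply/orP; left; apply/eqP; mx2_ring | apply/orP; right; apply/eqP; mx2_ring ].

Lemma epsmx_intertwines_S :
  all2 (intertwines_pm epsmx epsmx) [:: 1%:M; Smx] [:: 1%:M; Smx].
Proof. intertwines_pm_by_ring. Qed.

Lemma SmxEps_intertwines_U :
  all2 (intertwines_pm (Smx *m epsmx) (Smx *m epsmx))
    [:: 1%:M; Umx; Umx *m Umx] [:: 1%:M; Umx *m Umx; Umx].
Proof. intertwines_pm_by_ring. Qed.

Lemma epsmx_intertwines_Tw :
  all2 (intertwines_pm epsmx (epsmx *m Tw *m Smx))
    [:: 1%:M; Smx *m Tw; Tw *m Smx; invmx Tw *m Smx *m Tw *m Smx]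
    [:: Smx *m Tw; invmx Tw *m Smx *m Tw *m Smx; 1%:M; Tw *m Smx].
Proof. intertwines_pm_by_ring. Qed.

Lemma epsmx_invol : epsmx *m epsmx = 1%:M.
Proof. mx2_ring. Qed.

Lemma inWD k P Q : inW k P -> inW k Q -> inW k (P + Q).
Proof. by move=> [SP [UP XP]] [SQ [UQ XQ]]; split; [|split]; apply: inKerD. Qed.

Lemma inWCM k (c : algC) P : inW k P -> inW k (c%:P%:P * P).
Proof. by move=> [SP [UP XP]]; split; [|split]; apply: inKerCM. Qed.

Lemma inW_eps k P : inW k P -> inW k (act k epsmx P).
Proof.
move=> [kerS [kerU kerX]]; have degP : bideg k k P := kerS.1.
split; [|split].
- exact: inKer_intertwine epsmx_intertwines_S kerS.
- have -> : act k epsmx P = - act k (Smx *m epsmx) P.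
    by rewrite act_mulmx // act_Smx_inKer // actN opprK.
  apply/inKerN/(inKer_intertwine SmxEps_intertwines_U)/(inKer_perm _ kerU).
  by apply/permP => p /=; lia.
- apply/(inKer_intertwine epsmx_intertwines_Tw)/(inKer_perm _ kerX).
  by apply/permP => p /=; lia.
Qed.

Definition eps_part k (s : algC) P : bipoly :=
  (2^-1)%:P%:P * (P + s%:P%:P * act k epsmx P).

Lemma inWs_eps_part k (s : algC) P : s * s = 1 -> inW k P -> inWs k s (eps_part k s P).
Proof.
move=> ss1 WP; have degP : bideg k k P := WP.1.1.
split; first by apply/inWCM/inWD => //; apply/inWCM/inW_eps.
rewrite (@negvars_act k); last by apply/bidegCM/bidegD/bidegCM/bideg_act.
rewrite actCM actD actCM -act_mulmx // epsmx_invol act1mx //.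
have ssP : s%:P%:P * s%:P%:P = 1 :> bipoly by rewrite -!rmorphM ss1 !rmorph1.
by rewrite /eps_part; ring: ssP.
Qed.

Lemma half_add_half : (2^-1)%:P%:P + (2^-1)%:P%:P = 1 :> bipoly.
Proof. by rewrite -!rmorphD (_ : 2^-1 + 2^-1 = 1 :> algC) ?rmorph1 //; field. Qed.

Lemma eps_part_sum k P : P = eps_part k 1 P + eps_part k (-1) P.
Proof. by rewrite /eps_part !rmorphN !rmorph1; ring: half_add_half. Qed.

Lemma inWs1_inWsN1_eq0 k P : inWs k 1 P -> inWs k (-1) P -> P = 0.
Proof.
move=> [_ eP1] [_ eN1]; rewrite eP1 !rmorph1 mul1r !rmorphN !rmorph1 mulN1r in eN1.
by rewrite -[P]mul1r -half_add_half mulrDl {2}eN1 mulrN addrN.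
Qed.

Theorem proposition5p10 (k : nat) (hk : (1 <= k)%N) (hodd : odd k) :
  (* W_{k,k} | eps = W_{k,k} *)
  ((forall P : bipoly, inW k P -> inW k (act k epsmx P)) /\
   (forall Q : bipoly, inW k Q -> exists P : bipoly, inW k P /\ act k epsmx P = Q))
  /\
  (* W_{k,k} = W^1 (+) W^{-1} *)
  ((forall P : bipoly, inW k P ->
      exists P1 P2 : bipoly, inWs k 1 P1 /\ inWs k (-1) P2 /\ P = P1 + P2) /\
   (forall P : bipoly, inWs k 1 P -> inWs k (-1) P -> P = 0)).
Proof.
split; [split|split].
- exact: inW_eps.
- move=> Q WQ; exists (act k epsmx Q); split; first exact: inW_eps.
  by rewrite -act_mulmx ?epsmx_invol ?act1mx //; case: WQ => [[]].
- move=> P WP; exists (eps_part k 1 P), (eps_part k (-1) P).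
  split; [|split]; [exact: inWs_eps_part (mulr1 1) WP | | exact: eps_part_sum].
  by apply: inWs_eps_part WP; rewrite mulrNN mulr1.
- exact: inWs1_inWsN1_eq0.
Qed.
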